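(* Let $\left|\psi\right\rangle\in\mathbb{C}^{d_A}\otimes\mathbb{C}^{d_B}$ be a pure bipartite state and let $\rho_A=\mathrm{Tr}_B\left|\psi\right\rangle\left\langle\psi\right|$. Then $$E_{MB}(\left|\psi\right\rangle)=S(\rho_A)=-\mathrm{Tr}(\rho_A\log_2\rho_A),$$ i.e. the entanglement measurement bound of a bipartite pure state equals its entanglement entropy. Moreover, for every orthonormal basis $\{|c^k\rangle\}$ of $\mathbb{C}^{d_A}$, the Alice-outcome distribution $p_k=\langle c^k|\rho_A|c^k\rangle$ satisfies $-\sum_k p_k\log_2 p_k\ge S(\rho_A)$, with equality when $\{|c^k\rangle\}$ is an eigenbasis of $\rho_A$.
   Context: Entanglement measurement bound (EMB). Let $\left|\psi\right\rangle$ be a unit vector in $\mathcal{H}_1\otimes\cdots\otimes\mathcal{H}_N$, $\mathcal{H}_j=\mathbb{C}^{d_j}$. An adaptive local measurement scheme consists of: an ordering $\pi$ of the parties $\{1,\dots,N\}$; an orthonormal basis $\{|\phi^{(1)}_{i_1}\rangle\}_{i_1}$ of $\mathcal{H}_{\pi(1)}$; and, for each $k=2,\dots,N$ and each outcome history $(i_1,\dots,i_{k-1})$, an orthonormal basis $\{|\phi^{(k)}_{i_k|i_1\dots i_{k-1}}\rangle\}_{i_k}$ of $\mathcal{H}_{\pi(k)}$ (which may depend on the history). Its outcome distribution is $p_{i_1\dots i_N}=\big|\big(\langle\phi^{(1)}_{i_1}|\otimes\langle\phi^{(2)}_{i_2|i_1}|\otimes\cdots\otimes\langle\phi^{(N)}_{i_N|i_1\dots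 i_{N-1}}|\big)\left|\psi\right\rangle\big|^2$, where the $k$-th bra acts on the tensor factor of party $\pi(k)$. The EMB is $E_{MB}(\left|\psi\right\rangle)=\min H(\mathbf{p})$, where $H(\mathbf{p})=-\sum p_{i_1\dots i_N}\log_2 p_{i_1\dots i_N}$ is the Shannon entropy and the minimum is over all adaptive local measurement schemes (including all orderings of the parties). *)

From Stdlib Require Import Reals.
Open Scope R_scope.

Record Cpx := mkC { Re : R; Im : R }.
Definition C0 : Cpx := mkC 0 0.
Definition RtoC (r : R) : Cpx := mkC r 0.
Definition Cadd (x y : Cpx) : Cpx := mkC (Re x + Re y) (Im x + Im y).
Definition Cmul (x y : Cpx) : Cpx :=
  mkC (Re x * Re y - Im x * Im y) (Re x * Im y + Im x * Re y).
Definition Cconj (x : Cpx) : Cpx := mkC (Re x) (- Im x).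
Definition Cnorm2 (x : Cpx) : R := Re x * Re x + Im x * Im x.

Fixpoint sumR (n : nat) (f : nat -> R) : R :=
  match n with O => 0 | S m => sumR m f + f m end.
Fixpoint sumC (n : nat) (f : nat -> Cpx) : Cpx :=
  match n with O => C0 | S m => Cadd (sumC m f) (f m) end.

(* ---------- vectors in C^d (components with index < d are relevant) ---------- *)
Definition vec := nat -> Cpx.

Definition inner (d : nat) (u v : vec) : Cpx :=
  sumC d (fun i => Cmul (Cconj (u i)) (v i)).

Definition orthonormal_basis (d : nat) (e : nat -> vec) : Prop :=
  forall k l, (k < d)%nat -> (l < d)%nat ->
    inner d (e k) (e l) = (if Nat.eqb k l then RtoC 1 else C0).

Definition log2 (x : R) : R := ln x / ln 2.
(* x log2 x with the convention 0 log 0 = 0 *)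
Definition xlog2 (x : R) : R := if Rle_dec x 0 then 0 else x * log2 x.

Definition shannon (d : nat) (p : nat -> R) : R := - sumR d (fun k => xlog2 (p k)).

(* psi a b = coefficient of |a> (x) |b>, a < dA, b < dB *)
Definition unit_state (dA dB : nat) (psi : nat -> nat -> Cpx) : Prop :=
  sumR dA (fun a => sumR dB (fun b => Cnorm2 (psi a b))) = 1.

(* (<u| (x) <v|) |psi>, u acting on A, v acting on B *)
Definition amp (dA dB : nat) (psi : nat -> nat -> Cpx) (u v : vec) : Cpx :=
  sumC dA (fun a => sumC dB (fun b =>
    Cmul (Cmul (Cconj (u a)) (Cconj (v b))) (psi a b))).

(* Adaptive local measurement schemes for N = 2 parties: the two orderings. *)
Inductive scheme2 : Type :=
  (* A measured first in basis phi; then B in basis chi i, depending on A's outcome i *)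
  | AFirst (phi : nat -> vec) (chi : nat -> nat -> vec)
  (* B measured first in basis chi; then A in basis phi j, depending on B's outcome j *)
  | BFirst (chi : nat -> vec) (phi : nat -> nat -> vec).

Definition valid_scheme (dA dB : nat) (s : scheme2) : Prop :=
  match s with
  | AFirst phi chi =>
      orthonormal_basis dA phi /\ forall i, (i < dA)%nat -> orthonormal_basis dB (chi i)
  | BFirst chi phi =>
      orthonormal_basis dB chi /\ forall j, (j < dB)%nat -> orthonormal_basis dA (phi j)
  end.

Definition scheme_entropy (dA dB : nat) (psi : nat -> nat -> Cpx) (s : scheme2) : R :=
  match s with
  | AFirst phi chi =>
      - sumR dA (fun i => sumR dB (fun j =>
          xlog2 (Cnorm2 (amp dA dB psi (phi i) (chi i j)))))
  | BFirst chi phi =>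
      - sumR dB (fun j => sumR dA (fun i =>
          xlog2 (Cnorm2 (amp dA dB psi (phi j i) (chi j)))))
  end.

(* v is E_MB(psi): v is the minimum of H(p) over all adaptive local schemes *)
Definition is_EMB (dA dB : nat) (psi : nat -> nat -> Cpx) (v : R) : Prop :=
  (exists s, valid_scheme dA dB s /\ scheme_entropy dA dB psi s = v) /\
  (forall s, valid_scheme dA dB s -> v <= scheme_entropy dA dB psi s).

(* rho_A = Tr_B |psi><psi| : (rho_A)_{a a'} = sum_b psi_{a b} conj(psi_{a' b}) *)
Definition rhoA (dB : nat) (psi : nat -> nat -> Cpx) (a a' : nat) : Cpx :=
  sumC dB (fun b => Cmul (psi a b) (Cconj (psi a' b))).

Definition matvec (d : nat) (M : nat -> nat -> Cpx) (v : vec) : vec :=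
  fun i => sumC d (fun j => Cmul (M i j) (v j)).

Definition is_eigenbasis (d : nat) (M : nat -> nat -> Cpx) (e : nat -> vec) (lam : nat -> R) : Prop :=
  orthonormal_basis d e /\
  forall k i, (k < d)%nat -> (i < d)%nat -> matvec d M (e k) i = Cmul (RtoC (lam k)) (e k i).

(* S(rho) = -Tr(rho log2 rho) = - sum_k lam_k log2 lam_k, lam the spectrum of rho *)
Definition vN_entropy_of_spectrum (d : nat) (lam : nat -> R) : R :=
  - sumR d (fun k => xlog2 (lam k)).

Definition alice_dist (dA dB : nat) (psi : nat -> nat -> Cpx) (c : nat -> vec) (k : nat) : R :=
  Re (inner dA (c k) (matvec dA (rhoA dB psi) (c k))).

From Stdlib Require Import Reals Lra Lia ClassicalEpsilon.
From HB Require Import structures.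
From mathcomp Require ssreflect ssrfun ssrbool eqtype ssrnat choice fintype bigop ssralg matrix boolp.
Open Scope R_scope.

(* The Schmidt vectors G_k := (<e_k| ⊗ 1)|psi> are orthogonal in C^dB with ‖G_k‖² = λ_k.
   Measuring A in a basis c gives p_i = Σ_k λ_k |<e_k|c_i>|², with a doubly stochastic
   matrix of weights; measuring B in a basis χ gives q_j = Σ_k λ_k w_jk with
   w_jk = |<χ_j|G_k>|²/λ_k, doubly substochastic by Bessel's inequality.  Convexity of
   x log x then yields H(p), H(q) >= H(λ), and superadditivity of x log x shows that the
   second measurement of a scheme can only increase the entropy.  The bound is attained by
   measuring A in the eigenbasis and then, after outcome k, B in a basis whose first vector
   is parallel to G_k (obtained from a Householder reflection). *)

Lemma sumR_ext n f g : (forall i, (i < n)%nat -> f i = g i) -> sumR n f = sumR n g.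
Proof. induction n; simpl; intros H; [reflexivity|]. rewrite IHn, H; auto; intros; apply H; lia. Qed.

Lemma sumR_add n f g : sumR n (fun i => f i + g i) = sumR n f + sumR n g.
Proof. induction n; simpl; [ring|]. rewrite IHn; ring. Qed.

Lemma sumR_mull n c f : c * sumR n f = sumR n (fun i => c * f i).
Proof. induction n; simpl; [ring|]. rewrite <- IHn; ring. Qed.

Lemma sumR_zero n : sumR n (fun _ => 0) = 0.
Proof. induction n; simpl; auto. rewrite IHn; ring. Qed.

Lemma sumR_swap n m (f : nat -> nat -> R) :
  sumR n (fun i => sumR m (f i)) = sumR m (fun j => sumR n (fun i => f i j)).
Proof.
  induction n; simpl; [now rewrite sumR_zero|].
  rewrite IHn, <- sumR_add. reflexivity.
Qed.

Lemma sumR_le n f g : (forall i, (i < n)%nat -> f i <= g i) -> sumR n f <= sumR n g.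
Proof.
  induction n; simpl; intros H; [lra|].
  apply Rplus_le_compat; [apply IHn; intros|]; apply H; lia.
Qed.

Lemma sumR_ge0 n f : (forall i, (i < n)%nat -> 0 <= f i) -> 0 <= sumR n f.
Proof. intros H. rewrite <- (sumR_zero n). now apply sumR_le. Qed.

Lemma sumR_ge_term n f j : (forall i, (i < n)%nat -> 0 <= f i) -> (j < n)%nat ->
  f j <= sumR n f.
Proof.
  induction n; simpl; intros H Hj; [lia|].
  assert (0 <= sumR n f) by (apply sumR_ge0; intros; apply H; lia).
  assert (0 <= f n) by (apply H; lia).
  destruct (Nat.eq_dec j n) as [->|]; [lra|].
  assert (f j <= sumR n f) by (apply IHn; [intros; apply H|]; lia). lra.
Qed.

Lemma sumR_eq0_ge0 n f : (forall i, (i < n)%nat -> 0 <= f i) -> sumR n f = 0 ->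
  forall i, (i < n)%nat -> f i = 0.
Proof.
  intros H S i Hi. pose proof (sumR_ge_term n f i H Hi). pose proof (H i Hi). lra.
Qed.

Lemma sumR_single n f j : (j < n)%nat ->
  (forall i, (i < n)%nat -> i <> j -> f i = 0) -> sumR n f = f j.
Proof.
  induction n; simpl; intros Hj H; [lia|].
  destruct (Nat.eq_dec j n) as [->|].
  - rewrite (sumR_ext n f (fun _ => 0)), sumR_zero; [ring|intros; apply H; lia].
  - rewrite (H n), IHn by (try intros; try apply H; lia). ring.
Qed.

Lemma Cpx_ext (x y : Cpx) : Re x = Re y -> Im x = Im y -> x = y.
Proof. destruct x, y; simpl; intros; subst; reflexivity. Qed.

Ltac Csolve := apply Cpx_ext; simpl; ring.

Lemma sumC_ext n f g : (forall i, (i < n)%nat -> f i = g i) -> sumC n f = sumC n g.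
Proof. induction n; simpl; intros H; [reflexivity|]. rewrite IHn, H; auto; intros; apply H; lia. Qed.

Lemma sumC_add n f g : sumC n (fun i => Cadd (f i) (g i)) = Cadd (sumC n f) (sumC n g).
Proof. induction n; simpl; [Csolve|]. rewrite IHn. Csolve. Qed.

Lemma sumC_mull n c f : Cmul c (sumC n f) = sumC n (fun i => Cmul c (f i)).
Proof. induction n; simpl; [Csolve|]. rewrite <- IHn. Csolve. Qed.

Lemma sumC_mulr n c f : Cmul (sumC n f) c = sumC n (fun i => Cmul (f i) c).
Proof. induction n; simpl; [Csolve|]. rewrite <- IHn. Csolve. Qed.

Lemma sumC_zero n : sumC n (fun _ => C0) = C0.
Proof. induction n; simpl; auto. rewrite IHn; Csolve. Qed.

Lemma sumC_swap n m (f : nat -> nat -> Cpx) :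
  sumC n (fun i => sumC m (f i)) = sumC m (fun j => sumC n (fun i => f i j)).
Proof.
  induction n; simpl; [now rewrite sumC_zero|].
  rewrite IHn, <- sumC_add. reflexivity.
Qed.

Lemma sumC_prod n m f g :
  Cmul (sumC n f) (sumC m g) = sumC n (fun i => sumC m (fun j => Cmul (f i) (g j))).
Proof. rewrite sumC_mulr. apply sumC_ext; intros. now rewrite sumC_mull. Qed.

Lemma Re_sumC n f : Re (sumC n f) = sumR n (fun i => Re (f i)).
Proof. induction n; simpl; auto. now rewrite IHn. Qed.

Lemma Im_sumC n f : Im (sumC n f) = sumR n (fun i => Im (f i)).
Proof. induction n; simpl; auto. now rewrite IHn. Qed.

Lemma Cconj_sumC n f : Cconj (sumC n f) = sumC n (fun i => Cconj (f i)).
Proof. induction n; simpl; [Csolve|]. rewrite <- IHn. Csolve. Qed.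

Lemma sumC_kron n j (x : nat -> Cpx) : (j < n)%nat ->
  sumC n (fun i => Cmul (x i) (if Nat.eqb j i then RtoC 1 else C0)) = x j.
Proof.
  induction n; simpl; intros Hj; [lia|].
  destruct (Nat.eq_dec j n) as [->|Hjn].
  - rewrite (sumC_ext n _ (fun _ => C0)), sumC_zero, Nat.eqb_refl; [Csolve|].
    intros i Hi. destruct (Nat.eqb_spec n i); [lia|Csolve].
  - rewrite IHn by lia. destruct (Nat.eqb_spec j n); [lia|Csolve].
Qed.

Lemma Cnorm2_ge0 x : 0 <= Cnorm2 x.
Proof. unfold Cnorm2. nra. Qed.

Lemma Cnorm2_conj x : Cnorm2 (Cconj x) = Cnorm2 x.
Proof. unfold Cnorm2; simpl; ring. Qed.

Lemma Cnorm2_eq0 x : Cnorm2 x = 0 -> x = C0.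
Proof.
  unfold Cnorm2; destruct x as [a b]; simpl; intros.
  assert (a = 0) by nra. assert (b = 0) by nra. subst. reflexivity.
Qed.

Definition norm2 n (v : vec) : R := sumR n (fun i => Cnorm2 (v i)).

Lemma norm2_ge0 n v : 0 <= norm2 n v.
Proof. apply sumR_ge0; intros; apply Cnorm2_ge0. Qed.

Lemma inner_self n w : inner n w w = RtoC (norm2 n w).
Proof.
  apply Cpx_ext; unfold inner.
  - rewrite Re_sumC. apply sumR_ext; intros; unfold Cnorm2; simpl; ring.
  - rewrite Im_sumC; simpl. rewrite <- (sumR_zero n). apply sumR_ext; intros; simpl; ring.
Qed.

Lemma norm2_inner n v : norm2 n v = Re (inner n v v).
Proof. now rewrite inner_self. Qed.

Lemma inner_conj n u v : Cconj (inner n u v) = inner n v u.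
Proof. unfold inner. rewrite Cconj_sumC. apply sumC_ext; intros; Csolve. Qed.

Lemma Cnorm2_inner_sym n u v : Cnorm2 (inner n u v) = Cnorm2 (inner n v u).
Proof. now rewrite <- inner_conj, Cnorm2_conj. Qed.

Lemma inner_ext_l n u u' v : (forall i, (i < n)%nat -> u i = u' i) -> inner n u v = inner n u' v.
Proof. intros H; apply sumC_ext; intros; now rewrite H. Qed.

Lemma inner_ext_r n u v v' : (forall i, (i < n)%nat -> v i = v' i) -> inner n u v = inner n u v'.
Proof. intros H; apply sumC_ext; intros; now rewrite H. Qed.

Lemma inner_addl n u1 u2 w :
  inner n (fun i => Cadd (u1 i) (u2 i)) w = Cadd (inner n u1 w) (inner n u2 w).
Proof. unfold inner. rewrite <- sumC_add. apply sumC_ext; intros; Csolve. Qed.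

Lemma inner_addr n u w1 w2 :
  inner n u (fun i => Cadd (w1 i) (w2 i)) = Cadd (inner n u w1) (inner n u w2).
Proof. unfold inner. rewrite <- sumC_add. apply sumC_ext; intros; Csolve. Qed.

Lemma inner_scall n c u w : inner n (fun i => Cmul c (u i)) w = Cmul (Cconj c) (inner n u w).
Proof. unfold inner. rewrite sumC_mull. apply sumC_ext; intros; Csolve. Qed.

Lemma inner_scalr n c u w : inner n u (fun i => Cmul c (w i)) = Cmul c (inner n u w).
Proof. unfold inner. rewrite sumC_mull. apply sumC_ext; intros; Csolve. Qed.

Lemma inner_norm2_eq0_r n u v : norm2 n v = 0 -> inner n u v = C0.
Proof.
  intros Hv. rewrite <- (sumC_zero n). apply sumC_ext; intros i Hi.
  rewrite (Cnorm2_eq0 (v i)); [Csolve|].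
  exact (sumR_eq0_ge0 n _ (fun i _ => Cnorm2_ge0 (v i)) Hv i Hi).
Qed.

Definition lincomb m (x : nat -> Cpx) (G : nat -> vec) : vec :=
  fun i => sumC m (fun k => Cmul (x k) (G k i)).

Lemma inner_lincomb_r n m u x G :
  inner n u (lincomb m x G) = sumC m (fun k => Cmul (x k) (inner n u (G k))).
Proof.
  unfold inner, lincomb.
  rewrite (sumC_ext n _ (fun i => sumC m (fun k => Cmul (x k) (Cmul (Cconj (u i)) (G k i))))).
  2:{ intros i _. rewrite sumC_mull. apply sumC_ext; intros; Csolve. }
  rewrite sumC_swap. apply sumC_ext; intros; now rewrite sumC_mull.
Qed.

Lemma inner_lincomb_l n m v x G :
  inner n (lincomb m x G) v = sumC m (fun k => Cmul (Cconj (x k)) (inner n (G k) v)).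
Proof.
  rewrite <- inner_conj, inner_lincomb_r, Cconj_sumC. apply sumC_ext; intros.
  rewrite <- (inner_conj n v (G i)). Csolve.
Qed.

Module OnbColumns.
Import ssreflect ssrfun ssrbool eqtype ssrnat choice fintype bigop ssralg matrix boolp.
Import GRing.Theory.
Local Open Scope ring_scope.

HB.instance Definition _ := gen_eqMixin Cpx.
HB.instance Definition _ := gen_choiceMixin Cpx.

Definition Copp (x : Cpx) : Cpx := mkC (- Re x) (- Im x).

Lemma CaddA : associative Cadd.  Proof. move=> x y z; apply: Cpx_ext => /=; ring. Qed.
Lemma CaddC : commutative Cadd.  Proof. move=> x y; apply: Cpx_ext => /=; ring. Qed.
Lemma Cadd0 : left_id C0 Cadd.  Proof. move=> x; apply: Cpx_ext => /=; ring. Qed.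
Lemma CaddN : left_inverse C0 Copp Cadd.  Proof. move=> x; apply: Cpx_ext => /=; ring. Qed.
HB.instance Definition _ := GRing.isZmodule.Build Cpx CaddA CaddC Cadd0 CaddN.

Lemma CmulA : associative Cmul.  Proof. move=> x y z; apply: Cpx_ext => /=; ring. Qed.
Lemma CmulC : commutative Cmul.  Proof. move=> x y; apply: Cpx_ext => /=; ring. Qed.
Lemma Cmul1 : left_id (RtoC 1) Cmul.  Proof. move=> x; apply: Cpx_ext => /=; ring. Qed.
Lemma CmulDl : left_distributive Cmul Cadd.  Proof. move=> x y z; apply: Cpx_ext => /=; ring. Qed.
Lemma C1_neq0 : RtoC 1 != C0.
Proof. apply/eqP => h. have : Re (RtoC 1) = Re C0 by rewrite h. rewrite /=; lra. Qed.
HB.instance Definition _ :=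
  GRing.Zmodule_isComNzRing.Build Cpx CmulA CmulC Cmul1 CmulDl C1_neq0.

Lemma sumC_big n f : sumC n f = \sum_(i < n) f i.
Proof. elim: n => [|n IH]; first by rewrite big_ord0. by rewrite big_ord_recr /= IH. Qed.

Lemma kron_ord d (k l : 'I_d) : (if Nat.eqb k l then RtoC 1 else C0) = (k == l)%:R.
Proof.
  case: (Nat.eqb_spec k l) => h.
  - by rewrite (_ : k = l) ?eqxx //; apply: val_inj.
  - by case: eqP => // e; case: h; rewrite e.
Qed.

(* A square matrix with orthonormal rows is unitary, so its columns are orthonormal too. *)
Lemma onb_columns d (c : nat -> vec) : orthonormal_basis d c ->
  forall i j, (i < d)%coq_nat -> (j < d)%coq_nat ->
  sumC d (fun k => Cmul (c k i) (Cconj (c k j))) = if Nat.eqb i j then RtoC 1 else C0.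
Proof.
  move=> Hc i j /ltP hi /ltP hj.
  pose A : 'M[Cpx]_d := \matrix_(k, i) Cconj (c k i).
  pose B : 'M[Cpx]_d := \matrix_(i, k) c k i.
  have AB : A *m B = 1%:M.
    apply/matrixP => k l; rewrite !mxE -kron_ord.
    rewrite -(Hc k l (elimT ltP (ltn_ord k)) (elimT ltP (ltn_ord l))) /inner sumC_big.
    by apply: eq_bigr => a _; rewrite !mxE.
  have := congr1 (fun M : 'M[Cpx]_d => M (Ordinal hi) (Ordinal hj)) (mulmx1C AB).
  rewrite !mxE -(kron_ord _ (Ordinal hi) (Ordinal hj)) /= => <-.
  by rewrite sumC_big; apply: eq_bigr => k _; rewrite !mxE.
Qed.

End OnbColumns.

Lemma onb_expansion d e v i : orthonormal_basis d e -> (i < d)%nat ->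
  v i = sumC d (fun k => Cmul (inner d (e k) v) (e k i)).
Proof.
  intros He Hi. unfold inner.
  rewrite (sumC_ext d _ (fun k => sumC d (fun j => Cmul (v j) (Cmul (e k i) (Cconj (e k j)))))).
  2:{ intros k _. rewrite sumC_mulr. apply sumC_ext; intros; Csolve. }
  rewrite sumC_swap, <- (sumC_kron d i v Hi). apply sumC_ext; intros j Hj.
  now rewrite <- sumC_mull, OnbColumns.onb_columns.
Qed.

Lemma parseval d c w : orthonormal_basis d c ->
  norm2 d w = sumR d (fun k => Cnorm2 (inner d (c k) w)).
Proof.
  intros Hc. rewrite norm2_inner.
  rewrite (inner_ext_r d w w (lincomb d (fun k => inner d (c k) w) c))
    by (intros; now apply onb_expansion).
  rewrite inner_lincomb_r, Re_sumC. apply sumR_ext; intros k _.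
  rewrite <- (inner_conj d (c k) w). unfold Cnorm2; simpl; ring.
Qed.

Lemma onb_norm2 d e k : orthonormal_basis d e -> (k < d)%nat -> norm2 d (e k) = 1.
Proof. intros He Hk. now rewrite norm2_inner, He, Nat.eqb_refl. Qed.

(* Members of the family with [lam k = 0] are zero vectors and are left out of the sum. *)
Lemma bessel_orthogonal n m (G : nat -> vec) (lam : nat -> R) (v : vec) :
  (forall k l, (k < m)%nat -> (l < m)%nat ->
     inner n (G k) (G l) = if Nat.eqb k l then RtoC (lam k) else C0) ->
  sumR m (fun k => if Rlt_dec 0 (lam k) then Cnorm2 (inner n (G k) v) / lam k else 0)
  <= norm2 n v.
Proof.
  intros HG.
  set (x := fun k => if Rlt_dec 0 (lam k) then Cmul (RtoC (/ lam k)) (inner n (G k) v) else C0).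
  (* [T] is the orthogonal projection of [v] onto the span of the [G k]; expand [‖v - T‖² >= 0]. *)
  set (T := lincomb m x G).
  set (S := sumR m (fun k => if Rlt_dec 0 (lam k) then Cnorm2 (inner n (G k) v) / lam k else 0)).
  assert (HTv : Re (inner n T v) = S).
  { unfold T. rewrite inner_lincomb_l, Re_sumC. apply sumR_ext; intros k Hk. unfold x.
    destruct (Rlt_dec 0 (lam k)); [|simpl; ring]. unfold Cnorm2; simpl; field; lra. }
  assert (HvT : Re (inner n v T) = S) by (rewrite <- inner_conj; exact HTv).
  assert (HTT : Re (inner n T T) = S).
  { unfold T at 1. rewrite inner_lincomb_l, Re_sumC. apply sumR_ext; intros k Hk.
    unfold T. rewrite inner_lincomb_r.
    rewrite (sumC_ext m _ (fun l => Cmul (Cmul (x l) (RtoC (lam k)))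
                                   (if Nat.eqb k l then RtoC 1 else C0))).
    2:{ intros l Hl. rewrite HG; auto. destruct (Nat.eqb_spec k l); subst; Csolve. }
    rewrite sumC_kron; auto. unfold x.
    destruct (Rlt_dec 0 (lam k)); [|simpl; ring]. unfold Cnorm2; simpl; field; lra. }
  pose proof (norm2_ge0 n (fun i => Cadd (v i) (Cmul (RtoC (-1)) (T i)))) as Hr.
  rewrite norm2_inner, inner_addl, !inner_addr, !inner_scall, !inner_scalr in Hr.
  rewrite norm2_inner. simpl in Hr, HTv, HvT, HTT. fold S. nra.
Qed.

(** * A basis adapted to a vector *)

Definition std (k : nat) : vec := fun i => if Nat.eqb k i then RtoC 1 else C0.

Lemma inner_std_l n k g : (k < n)%nat -> inner n (std k) g = g k.
Proof.
  intros Hk. rewrite <- (sumC_kron n k g Hk). apply sumC_ext; intros i _.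
  unfold std. destruct (Nat.eqb k i); Csolve.
Qed.

Lemma inner_std_r n k g : (k < n)%nat -> inner n g (std k) = Cconj (g k).
Proof. intros Hk. now rewrite <- inner_conj, inner_std_l. Qed.

Lemma std_onb n : orthonormal_basis n std.
Proof. intros k l Hk Hl. rewrite inner_std_l; auto. unfold std. now rewrite Nat.eqb_sym. Qed.

(* Rows of the reflection [1 - c w w^*]; it is unitary when [c = 2 / ‖w‖²]. *)
Definition householder (w : vec) (c : R) (k : nat) : vec :=
  fun i => Cadd (std k i) (Cmul (Cmul (RtoC (- c)) (Cconj (w k))) (w i)).

Lemma householder_onb n w : 0 < norm2 n w -> orthonormal_basis n (householder w (2 / norm2 n w)).
Proof.
  intros HN k l Hk Hl. unfold householder.
  rewrite inner_addl, !inner_addr, !inner_scall, !inner_scalr.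
  rewrite inner_std_l, inner_std_l, inner_std_r, inner_self; auto.
  set (N := norm2 n w) in *.
  unfold std. rewrite (Nat.eqb_sym l k). destruct (Nat.eqb k l); apply Cpx_ext; simpl; field; lra.
Qed.

Lemma exists_phase z : exists p, Cnorm2 p = 1 /\ Cmul (Cconj p) z = RtoC (sqrt (Cnorm2 z)).
Proof.
  pose proof (sqrt_sqrt _ (Cnorm2_ge0 z)) as Ha. pose proof (sqrt_pos (Cnorm2 z)).
  set (a := sqrt (Cnorm2 z)) in *. clearbody a. unfold Cnorm2 in *.
  destruct (Rlt_dec 0 a).
  - exists (mkC (Re z / a) (Im z / a)). split; [|apply Cpx_ext]; simpl;
      field_simplify_eq; nra.
  - exists (RtoC 1). assert (a = 0) by lra. subst a.
    split; [|apply Cpx_ext]; simpl; nra.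
Qed.

(* The Householder reflection exchanging [g] and a multiple of the first standard vector. *)
Lemma exists_onb_orthogonal_tail n (g : vec) : (0 < n)%nat -> exists v : nat -> vec,
  orthonormal_basis n v /\ forall j, (0 < j)%nat -> (j < n)%nat -> inner n (v j) g = C0.
Proof.
  intros Hn.
  destruct (Req_dec (norm2 n g) 0) as [Hg0|Hg0].
  { exists std. split; [apply std_onb|]. intros; now apply inner_norm2_eq0_r. }
  assert (Hg : 0 < norm2 n g) by (pose proof (norm2_ge0 n g); lra).
  pose proof (sqrt_sqrt _ (norm2_ge0 n g)) as Htt. pose proof (sqrt_lt_R0 _ Hg) as Ht.
  set (t := sqrt (norm2 n g)) in *.
  destruct (exists_phase (g 0%nat)) as [p [Hp Hpg]].
  pose proof (sqrt_pos (Cnorm2 (g 0%nat))). set (a := sqrt (Cnorm2 (g 0%nat))) in *.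
  set (beta := Cmul (RtoC t) p).
  set (w := fun i => Cadd (g i) (Cmul beta (std 0 i))).
  assert (Hwg : inner n w g = RtoC (t * t + t * a)).
  { unfold w. rewrite inner_addl, inner_scall, inner_std_l, inner_self, <- Htt by auto.
    replace (Cconj beta) with (Cmul (RtoC t) (Cconj p)) by Csolve.
    apply Cpx_ext; simpl; pose proof (f_equal Re Hpg); pose proof (f_equal Im Hpg);
      simpl in *; nra. }
  assert (HN : norm2 n w = 2 * (t * t + t * a)).
  { rewrite norm2_inner. unfold w at 2.
    rewrite inner_addr, inner_scalr, Hwg, inner_std_r by auto.
    unfold w, std. simpl Nat.eqb. unfold Cnorm2 in Hp.
    pose proof (f_equal Re Hpg) as Hre. simpl in *.
    assert (t * (Re p * Re (g 0%nat) + Im p * Im (g 0%nat)) = t * a) by (rewrite <- Hre; ring).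
    assert (t * t * (Re p * Re p + Im p * Im p) = t * t) by (rewrite Hp; ring).
    nra. }
  exists (householder w (2 / norm2 n w)). split.
  - apply householder_onb. rewrite HN. nra.
  - intros j Hj0 Hjn. unfold householder.
    rewrite inner_addl, inner_scall, inner_std_l, Hwg, HN by auto.
    unfold w, std. destruct (Nat.eqb_spec 0 j); [lia|].
    apply Cpx_ext; simpl; field; nra.
Qed.

(** * Convexity of x log x *)

Lemma ln2_pos : 0 < ln 2.
Proof. rewrite <- ln_1. apply ln_increasing; lra. Qed.

Lemma ln_le_sub1 y : 0 < y -> ln y <= y - 1.
Proof. intros Hy. pose proof (exp_ineq1_le (ln y)). rewrite exp_ln in H; lra. Qed.

Lemma xlog2_pos x : 0 < x -> xlog2 x = x * log2 x.
Proof. intros; unfold xlog2; destruct (Rle_dec x 0); lra. Qed.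

Lemma xlog2_0 : xlog2 0 = 0.
Proof. unfold xlog2; destruct (Rle_dec 0 0); lra. Qed.

Lemma xlog2_tangent x q : 0 <= x -> 0 < q -> x * log2 q + (x - q) / ln 2 <= xlog2 x.
Proof.
  intros Hx Hq. pose proof ln2_pos. unfold log2.
  destruct (Req_dec x 0) as [->|Hx0].
  - rewrite xlog2_0. apply Rmult_le_reg_r with (ln 2); auto. field_simplify; lra.
  - rewrite xlog2_pos by lra. unfold log2.
    apply Rmult_le_reg_r with (ln 2); auto. field_simplify; [|lra..].
    pose proof (ln_le_sub1 (q / x) ltac:(apply Rdiv_lt_0_compat; lra)) as L.
    unfold Rdiv in L. rewrite ln_mult, ln_Rinv in L by (try apply Rinv_0_lt_compat; lra).
    assert (L2 : x * (ln q + - ln x) <= x * (q * / x - 1)) by (apply Rmult_le_compat_l; lra).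
    replace (x * (q * / x - 1)) with (q - x) in L2 by (field; lra). nra.
Qed.

(* Jensen's inequality; sub-probability weights suffice since [xlog2 0 = 0]. *)
Lemma xlog2_jensen m (w x : nat -> R) :
  (forall k, (k < m)%nat -> 0 <= w k) -> (forall k, (k < m)%nat -> 0 <= x k) ->
  sumR m w <= 1 ->
  xlog2 (sumR m (fun k => w k * x k)) <= sumR m (fun k => w k * xlog2 (x k)).
Proof.
  intros Hw Hx Hs. set (q := sumR m (fun k => w k * x k)).
  assert (Hwx : forall k, (k < m)%nat -> 0 <= w k * x k) by (intros; apply Rmult_le_pos; auto).
  assert (Hq : 0 <= q) by (apply sumR_ge0; auto).
  destruct (Req_dec q 0) as [Hq0|Hq0].
  - rewrite Hq0, xlog2_0. apply sumR_ge0; intros k Hk.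
    destruct (Rmult_integral _ _ (sumR_eq0_ge0 m _ Hwx Hq0 k Hk)) as [-> | ->];
      [lra|rewrite xlog2_0; lra].
  - pose proof ln2_pos.
    apply Rle_trans with (sumR m (fun k => w k * (x k * log2 q + (x k - q) / ln 2))).
    + rewrite (sumR_ext _ _ (fun k => (log2 q + / ln 2) * (w k * x k) + (- q / ln 2) * w k))
        by (intros; cbv beta; field; lra).
      rewrite sumR_add, <- !sumR_mull. fold q. rewrite xlog2_pos by lra.
      assert (0 <= / ln 2 * (q - q * sumR m w)).
      { apply Rmult_le_pos; [left; apply Rinv_0_lt_compat; auto|nra]. }
      unfold Rdiv in *. nra.
    + apply sumR_le; intros k Hk. apply Rmult_le_compat_l; auto. apply xlog2_tangent; auto; lra.
Qed.

Lemma xlog2_superadditive n (x : nat -> R) : (forall j, (j < n)%nat -> 0 <= x j) ->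
  sumR n (fun j => xlog2 (x j)) <= xlog2 (sumR n x).
Proof.
  intros Hx. pose proof (sumR_ge0 n x Hx) as Hs.
  destruct (Req_dec (sumR n x) 0) as [Hs0|Hs0].
  - rewrite Hs0, xlog2_0, <- (sumR_zero n). apply Req_le, sumR_ext; intros j Hj.
    now rewrite (sumR_eq0_ge0 n x Hx Hs0 j Hj), xlog2_0.
  - rewrite xlog2_pos, Rmult_comm, sumR_mull by lra.
    apply sumR_le; intros j Hj. pose proof (Hx j Hj).
    destruct (Req_dec (x j) 0) as [->|Hj0]; [rewrite xlog2_0; lra|].
    rewrite xlog2_pos, Rmult_comm by lra.
    apply Rmult_le_compat_r; [lra|]. unfold log2, Rdiv.
    apply Rmult_le_compat_r; [left; apply Rinv_0_lt_compat, ln2_pos|].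
    destruct (Req_dec (x j) (sumR n x)) as [->|]; [lra|].
    left; apply ln_increasing; [lra|]. pose proof (sumR_ge_term n x j Hx Hj). lra.
Qed.

Lemma xlog2_doubly_substochastic n m (w : nat -> nat -> R) (lam : nat -> R) :
  (forall j k, (j < n)%nat -> (k < m)%nat -> 0 <= w j k) ->
  (forall k, (k < m)%nat -> 0 <= lam k) ->
  (forall j, (j < n)%nat -> sumR m (w j) <= 1) ->
  (forall k, (k < m)%nat -> 0 < lam k -> sumR n (fun j => w j k) = 1) ->
  sumR n (fun j => xlog2 (sumR m (fun k => w j k * lam k))) <= sumR m (fun k => xlog2 (lam k)).
Proof.
  intros Hw Hl Hrow Hcol.
  apply Rle_trans with (sumR n (fun j => sumR m (fun k => w j k * xlog2 (lam k)))).
  - apply sumR_le; intros j Hj. apply xlog2_jensen; auto.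
  - rewrite sumR_swap. apply Req_le, sumR_ext; intros k Hk.
    destruct (Req_dec (lam k) 0) as [->|Hk0].
    + rewrite xlog2_0, (sumR_ext n _ (fun _ => 0)), sumR_zero by (intros; ring). reflexivity.
    + rewrite (sumR_ext n _ (fun j => xlog2 (lam k) * w j k)) by (intros; ring).
      rewrite <- sumR_mull, Hcol; auto; [ring|]. pose proof (Hl k Hk); lra.
Qed.

(** * Bipartite pure states *)

Lemma unit_state_dB_pos dA dB psi : unit_state dA dB psi -> (0 < dB)%nat.
Proof.
  unfold unit_state. destruct dB; [|lia]. simpl. rewrite sumR_zero. lra.
Qed.

Section Bipartite.
Variables (dA dB : nat) (psi : nat -> nat -> Cpx).

(* [contractA u = (<u| ⊗ 1)|psi>] and [contractB v = (1 ⊗ <v|)|psi>]. *)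
Definition contractA (u : vec) : vec := fun b => sumC dA (fun a => Cmul (Cconj (u a)) (psi a b)).
Definition contractB (v : vec) : vec := fun a => sumC dB (fun b => Cmul (Cconj (v b)) (psi a b)).

Lemma rhoA_inner u v : inner dA u (matvec dA (rhoA dB psi) v) = inner dB (contractA v) (contractA u).
Proof.
  unfold inner, matvec, rhoA, contractA.
  rewrite (sumC_ext dA _ (fun a => sumC dA (fun a' => sumC dB (fun b =>
     Cmul (Cconj (u a)) (Cmul (Cmul (psi a b) (Cconj (psi a' b))) (v a')))))).
  2:{ intros a _. rewrite sumC_mull. apply sumC_ext; intros a' _.
      now rewrite sumC_mulr, sumC_mull. }
  rewrite (sumC_ext dB _ (fun b => sumC dA (fun a' => sumC dA (fun a =>
     Cmul (Cconj (u a)) (Cmul (Cmul (psi a b) (Cconj (psi a' b))) (v a')))))).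
  2:{ intros b _. rewrite Cconj_sumC, sumC_prod. apply sumC_ext; intros a' _.
      apply sumC_ext; intros a _. Csolve. }
  rewrite (sumC_swap dB dA), sumC_swap.
  apply sumC_ext; intros a _. now rewrite (sumC_swap dB dA).
Qed.

Lemma alice_dist_contractA c k : alice_dist dA dB psi c k = norm2 dB (contractA (c k)).
Proof. unfold alice_dist. now rewrite rhoA_inner, norm2_inner. Qed.

Lemma amp_contractA u v : amp dA dB psi u v = inner dB v (contractA u).
Proof.
  unfold amp, inner, contractA. rewrite sumC_swap. apply sumC_ext; intros b _.
  rewrite sumC_mull. apply sumC_ext; intros; Csolve.
Qed.

Lemma amp_contractB u v : amp dA dB psi u v = inner dA u (contractB v).
Proof.
  unfold amp, inner, contractB. apply sumC_ext; intros a _.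
  rewrite sumC_mull. apply sumC_ext; intros; Csolve.
Qed.

Variables (e : nat -> vec) (lam : nat -> R).
Hypothesis Hspec : is_eigenbasis dA (rhoA dB psi) e lam.

Definition schmidt_vec k := contractA (e k).

Lemma schmidt_vec_orthogonal k l : (k < dA)%nat -> (l < dA)%nat ->
  inner dB (schmidt_vec k) (schmidt_vec l) = if Nat.eqb k l then RtoC (lam k) else C0.
Proof.
  intros Hk Hl. destruct Hspec as [He Heig]. unfold schmidt_vec.
  rewrite <- rhoA_inner, (inner_ext_r dA _ _ (fun i => Cmul (RtoC (lam k)) (e k i)))
    by (intros; now apply Heig).
  rewrite inner_scalr, He by auto.
  destruct (Nat.eqb_spec l k), (Nat.eqb_spec k l); subst; try lia; Csolve.
Qed.

Lemma eigenvalue_norm2 k : (k < dA)%nat -> lam k = norm2 dB (schmidt_vec k).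
Proof. intros Hk. now rewrite norm2_inner, schmidt_vec_orthogonal, Nat.eqb_refl. Qed.

Lemma eigenvalue_ge0 k : (k < dA)%nat -> 0 <= lam k.
Proof. intros Hk; rewrite eigenvalue_norm2; auto; apply norm2_ge0. Qed.

Lemma norm2_contractA u :
  norm2 dB (contractA u) = sumR dA (fun k => Cnorm2 (inner dA (e k) u) * lam k).
Proof.
  destruct Hspec as [He _].
  set (x := fun k => Cconj (inner dA (e k) u)).
  assert (Hexp : forall b, contractA u b = lincomb dA x schmidt_vec b).
  { intros b. unfold contractA, lincomb, schmidt_vec, contractA, x.
    rewrite (sumC_ext dA _ (fun a => sumC dA (fun k =>
       Cmul (Cconj (inner dA (e k) u)) (Cmul (Cconj (e k a)) (psi a b))))).
    2:{ intros a Ha. rewrite (onb_expansion dA e u a He Ha) at 1.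
        rewrite Cconj_sumC, sumC_mulr. apply sumC_ext; intros; Csolve. }
    rewrite sumC_swap. apply sumC_ext; intros. now rewrite sumC_mull. }
  rewrite norm2_inner, (inner_ext_l dB _ (lincomb dA x schmidt_vec)),
    (inner_ext_r dB _ _ (lincomb dA x schmidt_vec)) by auto.
  rewrite inner_lincomb_l, Re_sumC. apply sumR_ext; intros k Hk.
  rewrite inner_lincomb_r.
  rewrite (sumC_ext dA _ (fun l => Cmul (Cmul (x l) (RtoC (lam k)))
                                  (if Nat.eqb k l then RtoC 1 else C0))).
  2:{ intros l Hl. rewrite schmidt_vec_orthogonal; auto.
      destruct (Nat.eqb_spec k l); subst; Csolve. }
  rewrite sumC_kron; auto. unfold x, Cnorm2; simpl; ring.
Qed.

Lemma measureA_entropy_bound c : orthonormal_basis dA c ->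
  sumR dA (fun i => xlog2 (norm2 dB (contractA (c i)))) <= sumR dA (fun k => xlog2 (lam k)).
Proof.
  intros Hc. pose proof Hspec as [He _].
  rewrite (sumR_ext dA _ (fun i => xlog2 (sumR dA (fun k =>
              Cnorm2 (inner dA (e k) (c i)) * lam k)))) by (intros; now rewrite norm2_contractA).
  apply xlog2_doubly_substochastic.
  - intros; apply Cnorm2_ge0.
  - exact eigenvalue_ge0.
  - intros i Hi. now rewrite <- parseval, onb_norm2 by auto.
  - intros k Hk _.
    rewrite (sumR_ext dA _ (fun i => Cnorm2 (inner dA (c i) (e k))))
      by (intros; apply Cnorm2_inner_sym).
    now rewrite <- parseval, onb_norm2.
Qed.

Lemma alice_entropy_ge c : orthonormal_basis dA c ->
  shannon dA (alice_dist dA dB psi c) >= vN_entropy_of_spectrum dA lam.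
Proof.
  intros Hc. unfold shannon, vN_entropy_of_spectrum.
  rewrite (sumR_ext dA _ (fun i => xlog2 (norm2 dB (contractA (c i)))))
    by (intros; now rewrite alice_dist_contractA).
  pose proof (measureA_entropy_bound c Hc). lra.
Qed.

Lemma shannon_alice_eigenbasis :
  shannon dA (alice_dist dA dB psi e) = vN_entropy_of_spectrum dA lam.
Proof.
  unfold shannon, vN_entropy_of_spectrum. f_equal. apply sumR_ext; intros k Hk.
  now rewrite alice_dist_contractA, (eigenvalue_norm2 k Hk).
Qed.

Lemma AFirst_entropy_ge phi chi : valid_scheme dA dB (AFirst phi chi) ->
  vN_entropy_of_spectrum dA lam <= scheme_entropy dA dB psi (AFirst phi chi).
Proof.
  intros [Hphi Hchi]. unfold vN_entropy_of_spectrum, scheme_entropy.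
  apply Ropp_le_contravar.
  eapply Rle_trans; [|apply (measureA_entropy_bound phi Hphi)].
  apply sumR_le; intros i Hi.
  eapply Rle_trans; [apply xlog2_superadditive; intros; apply Cnorm2_ge0|].
  rewrite (parseval dB (chi i)) by auto.
  apply Req_le. f_equal. apply sumR_ext; intros; now rewrite amp_contractA.
Qed.

Lemma BFirst_entropy_ge chi phi : valid_scheme dA dB (BFirst chi phi) ->
  vN_entropy_of_spectrum dA lam <= scheme_entropy dA dB psi (BFirst chi phi).
Proof.
  intros [Hchi Hphi]. pose proof Hspec as [He _].
  unfold vN_entropy_of_spectrum, scheme_entropy. apply Ropp_le_contravar.
  set (w := fun j k => if Rlt_dec 0 (lam k)
                       then Cnorm2 (inner dB (schmidt_vec k) (chi j)) / lam k else 0).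
  assert (Hmarginal : forall j, (j < dB)%nat ->
    sumR dA (fun i => Cnorm2 (amp dA dB psi (phi j i) (chi j)))
    = sumR dA (fun k => w j k * lam k)).
  { intros j Hj.
    rewrite (sumR_ext dA _ (fun i => Cnorm2 (inner dA (phi j i) (contractB (chi j)))))
      by (intros; now rewrite amp_contractB).
    rewrite <- parseval, (parseval dA e) by auto. apply sumR_ext; intros k Hk.
    rewrite <- amp_contractB, amp_contractA, Cnorm2_inner_sym. fold (schmidt_vec k).
    unfold w. destruct (Rlt_dec 0 (lam k)); [field; lra|].
    assert (Hk0 : norm2 dB (schmidt_vec k) = 0)
      by (rewrite <- eigenvalue_norm2 by auto; pose proof (eigenvalue_ge0 k Hk); lra).
    rewrite <- inner_conj, (inner_norm2_eq0_r dB (chi j) _ Hk0).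
    unfold Cnorm2; simpl; ring. }
  apply Rle_trans with (sumR dB (fun j => xlog2 (sumR dA (fun k => w j k * lam k)))).
  - apply sumR_le; intros j Hj. rewrite <- Hmarginal by auto.
    apply xlog2_superadditive; intros; apply Cnorm2_ge0.
  - apply xlog2_doubly_substochastic.
    + intros j k _ _. unfold w. destruct (Rlt_dec 0 (lam k)); [|lra].
      apply Rle_mult_inv_pos; [apply Cnorm2_ge0|lra].
    + exact eigenvalue_ge0.
    + intros j Hj. rewrite <- (onb_norm2 dB chi j) by auto.
      apply bessel_orthogonal, schmidt_vec_orthogonal.
    + intros k Hk Hl. unfold w. destruct (Rlt_dec 0 (lam k)); [|lra].
      rewrite (sumR_ext dB _ (fun j => / lam k * Cnorm2 (inner dB (chi j) (schmidt_vec k))))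
        by (intros; rewrite Cnorm2_inner_sym; cbv beta; unfold Rdiv; ring).
      rewrite <- sumR_mull, <- parseval, <- eigenvalue_norm2 by auto. field; lra.
Qed.

Lemma eigen_scheme_attains : (0 < dB)%nat ->
  exists s, valid_scheme dA dB s /\ scheme_entropy dA dB psi s = vN_entropy_of_spectrum dA lam.
Proof.
  intros HdB. pose proof Hspec as [He _].
  assert (Hchi : exists chi : nat -> nat -> vec, forall i, orthonormal_basis dB (chi i) /\
             forall j, (0 < j)%nat -> (j < dB)%nat -> inner dB (chi i j) (schmidt_vec i) = C0).
  { exists (fun i => proj1_sig (constructive_indefinite_description _
                 (exists_onb_orthogonal_tail dB (schmidt_vec i) HdB))).
    intros i. exact (proj2_sig (constructive_indefinite_description _
                 (exists_onb_orthogonal_tail dB (schmidt_vec i) HdB))). }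
  destruct Hchi as [chi Hchi].
  exists (AFirst e chi). split; [split; auto; intros; apply Hchi|].
  unfold scheme_entropy, vN_entropy_of_spectrum. f_equal.
  apply sumR_ext; intros i Hi. destruct (Hchi i) as [Hon Hz].
  set (q := fun j => Cnorm2 (inner dB (chi i j) (schmidt_vec i))).
  assert (Hq : forall j, (j < dB)%nat -> j <> 0%nat -> q j = 0)
    by (intros j Hj Hj0; unfold q; rewrite Hz by lia; unfold Cnorm2; simpl; ring).
  rewrite (sumR_ext dB _ (fun j => xlog2 (q j))) by (intros; now rewrite amp_contractA).
  rewrite (sumR_single dB _ 0 HdB) by (intros j Hj Hj0; now rewrite Hq, xlog2_0).
  rewrite (eigenvalue_norm2 i), (parseval dB (chi i)) by auto.
  f_equal. symmetry. exact (sumR_single dB q 0 HdB Hq).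
Qed.

End Bipartite.

Theorem mainTheorem1 (dA dB : nat) (psi : nat -> nat -> Cpx)
  (Hpsi : unit_state dA dB psi)
  (e : nat -> vec) (lam : nat -> R)
  (Hspec : is_eigenbasis dA (rhoA dB psi) e lam) :
  is_EMB dA dB psi (vN_entropy_of_spectrum dA lam) /\
  (forall c : nat -> vec, orthonormal_basis dA c ->
     shannon dA (alice_dist dA dB psi c) >= vN_entropy_of_spectrum dA lam) /\
  (forall (c : nat -> vec) (mu : nat -> R), is_eigenbasis dA (rhoA dB psi) c mu ->
     shannon dA (alice_dist dA dB psi c) = vN_entropy_of_spectrum dA lam).
Proof.
  split; [split|split].
  - exact (eigen_scheme_attains dA dB psi e lam Hspec (unit_state_dB_pos dA dB psi Hpsi)).
  - intros [phi chi|chi phi].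
    + exact (AFirst_entropy_ge dA dB psi e lam Hspec phi chi).
    + exact (BFirst_entropy_ge dA dB psi e lam Hspec chi phi).
  - exact (alice_entropy_ge dA dB psi e lam Hspec).
  - intros c mu Hcm. pose proof Hspec as [He _]. pose proof Hcm as [Hc _].
    pose proof (alice_entropy_ge dA dB psi e lam Hspec c Hc).
    pose proof (alice_entropy_ge dA dB psi c mu Hcm e He).
    rewrite (shannon_alice_eigenbasis dA dB psi c mu Hcm) in *.
    rewrite (shannon_alice_eigenbasis dA dB psi e lam Hspec) in *. lra.
Qed.
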